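(* Let $\boldsymbol\mu=\{\mu_t\}_{t>0}$ be a factorizing family over $[0,1]\times L$. Then for every $0\le s<t\le1$, the measures $(R_{s,t})_*\mu_1$ and $\mu_{t-s}$ on $\mathscr C_{t-s}$ are mutually absolutely continuous, where $R_{s,t}:\mathscr C_1\to\mathscr C_{t-s}$ is $R_{s,t}(Z)=(Z\cap([s,t]\times L))-(s,0)$.
   Context: Let $L$ be a locally compact, second countable Hausdorff space. For $t>0$ let $\mathscr C_t$ be the space of closed subsets of $[0,t]\times L$ with the Borel $\sigma$-field of the Fell topology. For $s,t>0$, $\oplus_{s,t}(Z_1,Z_2)=Z_1\cup\{(s+r,\ell):(r,\ell)\in Z_2\}$, and $A-(s,0)=\{(r-s,\ell):(r,\ell)\in A\}$. A family $\{\mu_t\}_{t>0}$ of probability measures on $\mathscr C_t$ is a factorizing family over $[0,1]\times L$ if (i) $\mu_{s+t}$ and $(\mu_s\otimes\mu_t)\circ\oplus_{s,t}^{-1}$ are mutually absolutely continuous for all $s,t>0$, and (ii) $\mu_t(\{Z:Z\cap(\{r\}\times L)\neq\varnothing\})=0$ for all $t>0$, $r\in[0,t]$. *)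

From HB Require Import structures.
From mathcomp Require Import all_boot all_order all_algebra.
From mathcomp Require Import all_classical all_reals all_analysis.
Unset Printing Implicit Defensive.
Import Order.TTheory GRing.Theory Num.Theory numFieldNormedType.Exports.
Local Open Scope classical_set_scope.
Local Open Scope ring_scope.

Section Fell.
Context {R : realType} {L : topologicalType}.

Definition strip (t : R) : set (R * L) := `[0, t] `*` [set: L].

(* closed subsets of [0,t] x L (closed in [0,t] x L, i.e. closed in R x L
   and contained in [0,t] x L, since [0,t] x L is closed) *)
Definition closed_in_strip (t : R) (Z : set (R * L)) : Prop :=
  closed Z /\ Z `<=` strip t.

Definition ClosedSub (t : R) := {Z : set (R * L) | closed_in_strip t Z}.

Lemma closed_in_strip0 (t : R) : closed_in_strip t set0.
Proof. by split; [exact: closed0 | exact: sub0set]. Qed.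

HB.instance Definition _ (t : R) := gen_eqMixin (ClosedSub t).
HB.instance Definition _ (t : R) := gen_choiceMixin (ClosedSub t).
HB.instance Definition _ (t : R) :=
  isPointed.Build (ClosedSub t) (exist _ set0 (closed_in_strip0 t)).

Definition fell_subbase (t : R) : set (set (ClosedSub t)) :=
  [set U | (exists K : set (R * L), compact K /\ K `<=` strip t /\
               U = [set Z | proj1_sig Z `&` K = set0])
        \/ (exists G : set (R * L),
               (exists G' : set (R * L), open G' /\ G = G' `&` strip t) /\
               U = [set Z | proj1_sig Z `&` G !=set0])].

Definition generated_topology {T : Type} (S : set (set T)) : set (set T) :=
  fun O => forall F : set (set T), S `<=` F -> F setT ->
    (forall A B, F A -> F B -> F (A `&` B)) ->
    (forall G : set (set T), G `<=` F -> F (\bigcup_(A in G) A)) -> F O.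

Definition fell_open (t : R) : set (set (ClosedSub t)) :=
  generated_topology (fell_subbase t).

Definition Ct (t : R) := g_sigma_algebraType (fell_open t).

(* build an element of C_t from a set (defaults to the empty set if the
   set is not a closed subset of [0,t] x L; this never happens in the
   uses below) *)
Definition mkC (t : R) (A : set (R * L)) : Ct t :=
  match pselect (closed_in_strip t A) with
  | left h => exist _ A h
  | right _ => exist _ set0 (closed_in_strip0 t)
  end.

Definition shiftl (s : R) (A : set (R * L)) : set (R * L) :=
  (fun q : R * L => (q.1 - s, q.2)) @` A.

Definition oplus (s t : R) (p : Ct s * Ct t) : Ct (s + t) :=
  mkC (s + t) (proj1_sig p.1 `|`
               (fun q : R * L => (s + q.1, q.2)) @` proj1_sig p.2).

Definition restr (s t : R) (Z : Ct 1) : Ct (t - s) :=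
  mkC (t - s) (shiftl s (proj1_sig Z `&` (`[s, t] `*` [set: L]))).

Definition mutually_ac {d : measure_display}
    {T' : measurableType d} (m1 m2 : set T' -> \bar R) : Prop :=
  m1 `<< m2 /\ m2 `<< m1.

Definition factorizing (mu : forall t : R, probability (Ct t) R) : Prop :=
  (forall s t : R, 0 < s -> 0 < t ->
     mutually_ac (mu (s + t))
       (pushforward ((mu s) \x (mu t))%E (@oplus s t))) /\
  (forall t : R, 0 < t -> forall r : R, 0 <= r <= t ->
     mu t [set Z : Ct t | exists l : L, proj1_sig Z (r, l)] = 0%E).

End Fell.

From HB Require Import structures.
From mathcomp Require Import all_boot all_order all_algebra.
From mathcomp Require Import all_classical all_reals all_analysis.
From mathcomp Require Import finmap lra.
Import Order.TTheory GRing.Theory Num.Theory numFieldNormedType.Exports.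
Local Open Scope classical_set_scope.
Local Open Scope ring_scope.

(* Write Z = Z1 (+) Z2 with (Z1, Z2) of law mu_s x mu_(1-s): by factorization this
   changes mu_1 only up to mutual absolute continuity.  Since mu_s-almost surely Z1
   does not meet the slice {s} x L, the restriction R_(s,t)(Z1 (+) Z2) is almost
   surely R_(0,t-s)(Z2), so R_(s,t)^-1(A) is mu_1-null iff R_(0,t-s)^-1(A) is
   mu_(1-s)-null.  Splitting mu_(1-s) as mu_(t-s) x mu_(1-t) in the same way,
   R_(0,t-s)(Z1 (+) Z2) = Z1 almost surely, so the latter holds iff A is
   mu_(t-s)-null.
   For this, R_(s,t) and (+) must be Borel for the Fell topology.  A locally
   compact, second countable Hausdorff L has a countable base of open sets with
   compact closures; rational boxes over it yield a countable base of the Fell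
   topology, so a map into C_t is measurable as soon as the preimages of the
   subbasic sets "misses K" and "hits G" are, and for R_(s,t) and (+) these
   preimages are again such sets, up to a time shift. *)

Lemma fst_continuous {U V : topologicalType} : continuous (@fst U V).
Proof. by move=> q; exact: cvg_fst. Qed.

Lemma closed_setXT {U V : topologicalType} (A : set U) :
  closed A -> closed (A `*` [set: V]).
Proof. by move=> cA; rewrite setXT; exact: (continuous_closedP _).1 fst_continuous _ cA. Qed.

Lemma open_setX {U V : topologicalType} (A : set U) (B : set V) :
  open A -> open B -> open (A `*` B).
Proof.
move=> oA oB; rewrite openE => p [Ap Bp]; exists (A, B) => //=.
by split; apply: open_nbhs_nbhs; split.
Qed.

(* The library's [compact_cover] needs a pointed space; a nonempty [A] provides the point. *)
Lemma compact_cover_compact {T : topologicalType} {A : set T} :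
  compact A -> cover_compact A.
Proof.
move=> cA I D f fo Af; have [->|/set0P [a _]] := eqVneq A set0; first by exists fset0.
pose pT : ptopologicalType := HB.pack T (isPointed.Build T a).
have : @compact pT A := cA.
by rewrite compact_cover; apply.
Qed.

Section CompactClosureBase.
Context {L : topologicalType}.

Definition compact_closure_base (b : nat -> set L) :=
  [/\ forall n, open (b n), forall n, compact (closure (b n)) &
      forall x W, nbhs x W -> exists2 n, b n x & closure (b n) `<=` W].

Lemma compact_closure_base_exists : locally_compact [set: L] ->
  @second_countable L -> hausdorff_space L -> exists b, compact_closure_base b.
Proof.
move=> lcL [B cB [oB baseB]] hL.
have [f injf] := countable_injP _ cB.
pose b n := \bigcup_(U in [set U | [/\ B U, compact (closure U) & f U = n]]) U.
have bE U : B U -> compact (closure U) -> b (f U) = U.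
  move=> BU cU; apply/seteqP; split => [x [V [BV _ fV] Vx]|x Ux]; last by exists U.
  by rewrite -(injf V U (mem_set BV) (mem_set BU) fV).
exists b; split.
- by move=> n; apply: bigcup_open => U [BU _ _]; exact: oB.
- move=> n; have [[U [BU cU <-]]|nU] :=
    pselect (exists U, [/\ B U, compact (closure U) & f U = n]); first by rewrite bE.
  suff -> : b n = set0 by rewrite closure0; exact: compact0.
  by apply/seteqP; split => // x [U ? _]; apply: nU; exists U.
move=> x W Wx.
have [C] := lcL x I; rewrite withinET => Cx [cC clC].
have [D Dx DWC] := compact_regular hL cC Cx (filterI Wx Cx).
have [U [BU Ux] UD] := baseB x D Dx.
have clUWC : closure U `<=` W `&` C by move=> y /(closureS UD) /DWC.
have cU : compact (closure U).
  by apply: subclosed_compact (@closed_closure _ U) cC _ => y /clUWC [].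
by exists (f U); rewrite bE // => y /clUWC [].
Qed.

End CompactClosureBase.

Section TimeShift.
Context {R : realType} {L : topologicalType}.
Implicit Types (c : R) (A : set (R * L)).

Definition tshift c (q : R * L) : R * L := (q.1 + c, q.2).

Lemma tshift_continuous c : continuous (tshift c).
Proof.
move=> [x y]; apply: (@cvg_pair _ _ _ _ (nbhs (x + c)) (nbhs y)).
  by apply: cvgD; [exact: cvg_fst | exact: cvg_cst].
exact: cvg_snd.
Qed.

Lemma tshiftK c : cancel (tshift c) (tshift (- c)).
Proof. by case=> x y; rewrite /tshift /= addrK. Qed.

Lemma tshiftNK c : cancel (tshift (- c)) (tshift c).
Proof. by case=> x y; rewrite /tshift /= subrK. Qed.

Lemma image_tshift c A : tshift c @` A = tshift (- c) @^-1` A.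
Proof.
apply/seteqP; split => [_ [q Aq <-]|q Aq]; first by rewrite /= tshiftK.
by exists (tshift (- c) q) => //; rewrite tshiftNK.
Qed.

Lemma open_tshift c A : open A -> open (tshift c @` A).
Proof.
by move=> oA; rewrite image_tshift; exact: (continuousP _).1 (tshift_continuous _) _ oA.
Qed.

Lemma closed_tshift c A : closed A -> closed (tshift c @` A).
Proof.
by move=> cA; rewrite image_tshift; exact: (continuous_closedP _).1 (tshift_continuous _) _ cA.
Qed.

Lemma compact_tshift c A : compact A -> compact (tshift c @` A).
Proof.
by move=> cA; apply: continuous_compact => //; exact/continuous_subspaceT/tshift_continuous.
Qed.

Lemma closed_strip t : closed (@strip R L t).
Proof. exact/closed_setXT/itv_closed. Qed.

Lemma stripP t (p : R * L) : strip t p <-> 0 <= p.1 <= t.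
Proof. by rewrite /strip /= in_itv /=; split => [[]|]. Qed.

End TimeShift.

Section ClosedSets.
Context {R : realType} {L : topologicalType}.
Local Notation Ct := (@Ct R L).
Local Notation tshift := (@tshift R L).

Lemma Ct_inj t (Z Z' : Ct t) : sval Z = sval Z' -> Z = Z'.
Proof. by case: Z Z' => [A hA] [B hB] /= AB; exact: eq_exist. Qed.

Lemma Ct_strip {t} {Z : Ct t} {p} : sval Z p -> 0 <= p.1 <= t.
Proof. by move=> /(proj2 (svalP Z)) /stripP. Qed.

Lemma mkCE t (A : set (R * L)) : closed_in_strip t A -> sval (@mkC R L t A) = A.
Proof. by rewrite /mkC; case: pselect. Qed.

(* The paper's R_(s,s+d), for configurations on [0,u] x L. *)
Definition crop u d s (Z : Ct u) : Ct d :=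
  @mkC R L d (tshift (- s) @` (sval Z `&` (`[s, s + d] `*` [set: L]))).

Lemma restr_crop s t : @restr R L s t = crop 1 (t - s) s.
Proof. by apply/funext => Z; rewrite /restr /crop /shiftl (addrC s) subrK. Qed.

Lemma cropP u d s (Z : Ct u) p :
  sval (crop u d s Z) p <-> sval Z (p.1 + s, p.2) /\ 0 <= p.1 <= d.
Proof.
have crop_closed : closed_in_strip d
    (tshift (- s) @` (sval Z `&` (`[s, s + d] `*` [set: L]))).
  split.
    apply: closed_tshift; apply: closedI; first exact: (proj1 (svalP Z)).
    exact/closed_setXT/itv_closed.
  move=> q; rewrite image_tshift => -[_ [/= + _]]; rewrite in_itv /= opprK.
  by move=> /andP [q1 q2]; apply/stripP/andP; split; lra.
rewrite /crop mkCE // image_tshift /= opprK in_itv /=.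
split => [[Zp [/andP [p1 p2] _]]|[Zp /andP [p1 p2]]].
  by split => //; apply/andP; split; lra.
by split => //; split => //; apply/andP; split; lra.
Qed.

Lemma oplusE a b (Z1 : Ct a) (Z2 : Ct b) : 0 <= a -> 0 <= b ->
  sval (oplus a b (Z1, Z2)) = sval Z1 `|` tshift a @` sval Z2.
Proof.
move=> a0 b0; rewrite /oplus /=; have -> : (fun q : R * L => (a + q.1, q.2)) = tshift a.
  by apply/funext => q; rewrite /tshift addrC.
apply: mkCE; split.
  by apply: closedU; [exact: (proj1 (svalP Z1)) | exact/closed_tshift/(proj1 (svalP Z2))].
move=> p [/Ct_strip|]; last rewrite image_tshift => /Ct_strip /=.
all: by move=> /andP [p0 p1]; apply/stripP/andP; split; lra.
Qed.

Lemma oplusP a b (Z1 : Ct a) (Z2 : Ct b) p : 0 <= a -> 0 <= b ->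
  sval (oplus a b (Z1, Z2)) p <-> sval Z1 p \/ sval Z2 (p.1 - a, p.2).
Proof. by move=> a0 b0; rewrite oplusE // image_tshift. Qed.

Lemma crop_oplusr a b d (Z1 : Ct a) (Z2 : Ct b) : 0 <= a -> 0 <= b ->
  ~ (exists l, sval Z1 (a, l)) ->
  crop (a + b) d a (oplus a b (Z1, Z2)) = crop b d 0 Z2.
Proof.
move=> a0 b0 Z1a; apply: Ct_inj; apply/seteqP; split => p /cropP [+ p0d].
  rewrite oplusP //= addrK => -[Z1p|Z2p]; last by apply/cropP; rewrite addr0.
  have p0 : p.1 = 0 by move: p0d (Ct_strip Z1p) => /andP [? _] /= /andP [_ ?]; lra.
  by exfalso; apply: Z1a; exists p.2; rewrite p0 add0r in Z1p.
rewrite addr0 => Z2p; apply/cropP; split => //.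
by apply/oplusP => //; right; rewrite /= addrK.
Qed.

Lemma crop_oplusl a b (Z1 : Ct a) (Z2 : Ct b) : 0 <= a -> 0 <= b ->
  ~ (exists l, sval Z2 (0, l)) ->
  crop (a + b) a 0 (oplus a b (Z1, Z2)) = Z1.
Proof.
move=> a0 b0 Z20; apply: Ct_inj; apply/seteqP; split => p.
  move=> /cropP [+ /andP [p0 pa]]; rewrite oplusP // addr0 -surjective_pairing /=.
  case=> // Z2p; exfalso; apply: Z20; exists p.2.
  have /andP [pa' _] := Ct_strip Z2p; rewrite /= in pa'.
  by move: Z2p; have -> : p.1 - a = 0 by lra.
move=> Z1p; apply/cropP; rewrite /= addr0 -surjective_pairing; split; last exact: Ct_strip Z1p.
by apply/oplusP => //; left.
Qed.

Lemma crop_id d (Z : Ct d) : crop d d 0 Z = Z.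
Proof.
apply: Ct_inj; apply/seteqP; split => p; rewrite cropP addr0 -surjective_pairing.
  by case.
by move=> Zp; split => //; exact: Ct_strip Zp.
Qed.

End ClosedSets.

Section Boxes.
Context {R : realType} {L : topologicalType} (b : nat -> set L).
Hypothesis hb : compact_closure_base b.

Definition box_index := (rat * rat * nat)%type.

Definition openbox (i : box_index) : set (R * L) :=
  `](ratr i.1.1 : R), ratr i.1.2[ `*` b i.2.

Definition closedbox (i : box_index) : set (R * L) :=
  `[(ratr i.1.1 : R), ratr i.1.2] `*` closure (b i.2).

Lemma open_openbox i : open (openbox i).
Proof. by case: hb => ob _ _; apply: open_setX; [exact: itv_open | exact: ob]. Qed.

Lemma compact_closedbox i : compact (closedbox i).
Proof. by case: hb => _ cb _; apply: compact_setX; [exact: segment_compact | exact: cb]. Qed.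

Lemma box_approx p W : nbhs p W -> exists i, openbox i p /\ closedbox i `<=` W.
Proof.
case: p => x y [[P Q] [/= Px Qy] PQW].
have [e /= e0 eP] := (nbhs_ballP _ _).1 Px; rewrite ball_itv in eP.
have /rat_in_itvoo [q1] : x - e < x by lra.
have /rat_in_itvoo [q2] : x < x + e by lra.
rewrite !in_itv /= => /andP [xq2 q2e] /andP [eq1 q1x].
case: hb => _ _ /(_ y Q Qy) [n bny clbnQ].
exists (q1, q2, n); split; first by split => //=; rewrite in_itv /= q1x xq2.
move=> [r l] [/= + /clbnQ Ql]; rewrite in_itv /= => /andP [q1r rq2].
by apply: (PQW (r, l)); split => //=; apply: eP; rewrite /= in_itv /=; apply/andP; split; lra.
Qed.

Lemma openbox_closedbox i : openbox i `<=` closedbox i.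
Proof.
move=> [r l] [/= + bl]; rewrite !in_itv /= => /andP [r1 r2]; split; last exact: subset_closure.
by rewrite /= in_itv /=; apply/andP; split; exact: ltW.
Qed.

End Boxes.
Arguments open_openbox {R L b}.
Arguments compact_closedbox {R L b}.
Arguments box_approx {R L b} hb {p W}.
Arguments openbox_closedbox {R L b}.

Section FellSets.
Context {R : realType} {L : topologicalType}.
Local Notation Ct := (@Ct R L).
Implicit Types (t : R) (A B G K : set (R * L)).

Definition misses t (K : set (R * L)) : set (Ct t) := [set Z | sval Z `&` K = set0].

Definition hits t (G : set (R * L)) : set (Ct t) := [set Z | sval Z `&` G !=set0].

Definition hits_slice t (r : R) : set (Ct t) := [set Z | exists l, sval Z (r, l)].

Lemma hitsE t G : hits t G = ~` misses t G.
Proof. by apply/seteqP; split => Z /=; [move=> /set0P /eqP | move=> /eqP /set0P]. Qed.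

Lemma missesE t A : misses t A = ~` hits t A.
Proof. by rewrite hitsE setCK. Qed.

Lemma missesU t A B : misses t (A `|` B) = misses t A `&` misses t B.
Proof. by apply/seteqP; split => Z; rewrite /misses /= setIUr setU_eq0. Qed.

Lemma misses_strip t K : misses t K = misses t (K `&` strip t).
Proof.
apply/seteqP; split => Z; rewrite /misses /= => ZK; apply/seteqP; split => // p.
  by move=> [Zp [Kp _]]; rewrite -ZK.
by move=> [Zp Kp]; rewrite -ZK; split => //; split => //; exact/stripP/(Ct_strip Zp).
Qed.

Lemma hits_strip t G : hits t (G `&` strip t) = hits t G.
Proof.
apply/seteqP; split => Z [p [Zp Gp]]; exists p; split => //; first by case: Gp.
by split => //; exact/stripP/(Ct_strip Zp).
Qed.

Lemma misses_measurable t K : compact K -> measurable (misses t K).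
Proof.
move=> cK; rewrite misses_strip; apply: sub_sigma_algebra => F sbF _ _ _; apply: sbF.
by left; exists (K `&` strip t); split; [exact: compact_closedI (closed_strip t) | split].
Qed.

End FellSets.

Section FellMeasurable.
Context {R : realType} {L : topologicalType} {b : nat -> set L}.
Hypothesis hb : compact_closure_base b.
Local Notation Ct := (@Ct R L).
Local Notation openbox := (@openbox R L b).
Local Notation closedbox := (@closedbox R L b).
Implicit Types (t : R) (G C : set (R * L)).

Lemma hits_measurable t G C : open G -> closed C -> measurable (hits t (G `&` C)).
Proof.
move=> oG cC.
have -> : hits t (G `&` C) = \bigcup_i
    (if `[< closedbox i `<=` G >] then hits t (closedbox i `&` C) else set0).
  apply/seteqP; split => Z.
    move=> [z [Zz [Gz Cz]]].
    have [i [iz iG]] := box_approx hb (open_nbhs_nbhs (conj oG Gz)).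
    exists i => //; rewrite asboolT //; exists z; split => //; split => //.
    exact: openbox_closedbox.
  move=> [i _]; case: asboolP => // iG [z [Zz [iz Cz]]].
  by exists z; split => //; split => //; exact: iG.
apply: countable_bigcupT_measurable => [|i]; first exact: countableP.
case: asboolP => _; last exact: measurable0.
rewrite hitsE; apply: measurableC.
exact: misses_measurable (compact_closedI (compact_closedbox hb i) cC).
Qed.

Definition boxes (ks : seq box_index) : set (R * L) := \big[setU/set0]_(i <- ks) closedbox i.

(* Indexed by a countable type: this is where second countability of L enters. *)
Definition fell_basic t (m : seq box_index * seq box_index) : set (Ct t) :=
  misses t (boxes m.1) `&` \big[setI/setT]_(i <- m.2) hits t (openbox i).

Lemma compact_boxes ks : compact (boxes ks).
Proof.
apply: big_ind => [|A B|i _]; [exact: compact0 | exact: compactU |].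
exact: compact_closedbox hb i.
Qed.

Lemma fell_basic_cat t ks1 gs1 ks2 gs2 :
  fell_basic t (ks1 ++ ks2, gs1 ++ gs2) = fell_basic t (ks1, gs1) `&` fell_basic t (ks2, gs2).
Proof. by rewrite /fell_basic /boxes /= !big_cat missesU setIACA. Qed.

Lemma fell_basic_misses t K Z : compact K -> misses t K Z ->
  exists m, fell_basic t m Z /\ fell_basic t m `<=` misses t K.
Proof.
move=> cK ZK; pose good := [set i | closedbox i `&` sval Z = set0].
have Kgood : K `<=` \bigcup_(i in good) openbox i.
  move=> k Kk; have nZk : ~ sval Z k by move=> Zk; have : (sval Z `&` K) k by []; rewrite ZK.
  have Zck : nbhs k (~` sval Z).
    by apply: open_nbhs_nbhs; split => //; exact/closed_openC/(proj1 (svalP Z)).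
  have [i [ik iZ]] := box_approx hb Zck.
  by exists i => //; apply/seteqP; split => // p [/iZ].
have [D Dgood KD] := compact_cover_compact cK _ _ _ (fun i _ => open_openbox hb i) Kgood.
exists (enum_fset D, [::]); split.
  split; last by rewrite big_nil.
  rewrite /misses /boxes /= -bigcup_seq setI_bigcupr; apply/seteqP; split => // p [i /= iD].
  move=> [Zp ip]; have := Dgood i iD; rewrite in_setE /good => iZ.
  by have : (closedbox i `&` sval Z) p by []; rewrite iZ.
move=> Y [+ _]; rewrite /misses /boxes /= -bigcup_seq => YD.
apply/seteqP; split => // p [Yp Kp]; have [i iD ip] := KD p Kp; rewrite -YD; split => //.
by exists i; [exact: iD | exact: openbox_closedbox].
Qed.

Lemma fell_basic_hits t G Z : open G -> hits t G Z ->
  exists m, fell_basic t m Z /\ fell_basic t m `<=` hits t G.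
Proof.
move=> oG [z [Zz Gz]]; have [i [iz iG]] := box_approx hb (open_nbhs_nbhs (conj oG Gz)).
exists ([::], [:: i]); split.
  split; first by rewrite /misses /boxes /= big_nil setI0.
  by rewrite big_seq1; exists z.
move=> Y [_]; rewrite big_seq1 => -[p [Yp ip]].
by exists p; split => //; exact/iG/openbox_closedbox.
Qed.

Lemma fell_open_basic {t} {U : set (Ct t)} : fell_open t U ->
  forall Z, U Z -> exists m, fell_basic t m Z /\ fell_basic t m `<=` U.
Proof.
move=> /(_ [set V | forall Z, V Z -> exists m, fell_basic t m Z /\ fell_basic t m `<=` V]).
apply; last first.
- move=> F FO Z [A FA AZ]; have [m [mZ mA]] := FO A FA Z AZ.
  by exists m; split => // Y /mA AY; exists A.
- move=> A B AO BO Z [AZ BZ].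
  have [[ks1 gs1] [m1Z m1A]] := AO Z AZ; have [[ks2 gs2] [m2Z m2B]] := BO Z BZ.
  exists (ks1 ++ ks2, gs1 ++ gs2); rewrite fell_basic_cat.
  by split => // Y [/m1A ? /m2B ?].
- move=> Z _; exists ([::], [::]); split => //; split; last by rewrite big_nil.
  by rewrite /misses /boxes /= big_nil setI0.
move=> V [[K [cK [_ ->]]] Z|[_ [[G [oG ->]] ->]] Z]; first exact: fell_basic_misses.
by move=> GZ; have := fell_basic_hits t G Z oG; rewrite -hits_strip; apply.
Qed.

Lemma measurable_fun_Ct dX (X : measurableType dX) t (f : X -> Ct t) :
  (forall K, compact K -> measurable (f @^-1` misses t K)) ->
  (forall G, open G -> measurable (f @^-1` hits t G)) ->
  measurable_fun setT f.
Proof.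
move=> fK fG; apply: (@measurability _ _ _ _ setT f (fell_open t)) => //.
move=> _ [U hU <-].
have -> : setT `&` f @^-1` U = \bigcup_m
    (if `[< fell_basic t m `<=` U >] then f @^-1` fell_basic t m else set0).
  rewrite setTI; apply/seteqP; split => [x Ufx|x [m _]]; last by case: asboolP => // mU /mU.
  by have [m [mfx mU]] := fell_open_basic hU _ Ufx; exists m; rewrite ?asboolT.
apply: countable_bigcupT_measurable => [|[ks gs]]; first exact: countableP.
case: asboolP => _; last exact: measurable0.
rewrite /fell_basic preimage_setI -bigcap_seq preimage_bigcap bigcap_seq.
apply: measurableI; first exact/fK/compact_boxes.
by apply: bigsetI_measurable => i _; exact/fG/(open_openbox hb).
Qed.

End FellMeasurable.

Section Preimages.
Context {R : realType} {L : topologicalType}.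
Local Notation Ct := (@Ct R L).
Local Notation tshift := (@tshift R L).
Implicit Types (A : set (R * L)).

Lemma preimage_crop_hits u d s A :
  crop u d s @^-1` hits d A = hits u (tshift s @` (A `&` strip d)).
Proof.
apply/seteqP; split => Z [p].
  move=> [/cropP [Zp p0d] Ap]; exists (tshift s p); split => //.
  by exists p => //; split => //; exact/stripP.
rewrite image_tshift => -[Zp [Ap /stripP p0d]]; exists (tshift (- s) p).
by split => //; apply/cropP; rewrite /= subrK -surjective_pairing.
Qed.

Lemma preimage_oplus_hits a e A : 0 <= a -> 0 <= e ->
  oplus a e @^-1` hits (a + e) A =
  hits a A `*` [set: Ct e] `|` [set: Ct a] `*` hits e (tshift (- a) @` A).
Proof.
move=> a0 e0; apply/seteqP; split => -[Z1 Z2]; rewrite /hits /= ?oplusE //.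
  move=> [p [[Z1p|[q Z2q <-]] Ap]]; [left | right]; split => //; first by exists p.
  by exists q; split => //; rewrite image_tshift /= opprK.
move=> [[[p [Z1p Ap]] _]|[_ [q [Z2q]]]]; first by exists p; split => //; left.
by rewrite image_tshift /= opprK => Aq; exists (tshift a q); split => //; right; exists q.
Qed.

Lemma preimage_oplus_misses a e A : 0 <= a -> 0 <= e ->
  oplus a e @^-1` misses (a + e) A = misses a A `*` misses e (tshift (- a) @` A).
Proof.
move=> a0 e0; rewrite missesE -(preimage_setC (oplus a e)) preimage_oplus_hits // !missesE.
by apply/seteqP; split => -[Z1 Z2] /=; tauto.
Qed.

End Preimages.

Section MeasurableMaps.
Context {R : realType} {L : topologicalType} {b : nat -> set L}.
Hypothesis hb : compact_closure_base b.
Local Notation Ct := (@Ct R L).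

Lemma hits_open_measurable t (G : set (R * L)) : open G -> measurable (hits t G).
Proof. by move=> oG; rewrite -[G]setIT; exact: (hits_measurable hb) closedT. Qed.

Lemma measurable_crop u d s : measurable_fun setT (crop u d s : Ct u -> Ct d).
Proof.
apply: (measurable_fun_Ct hb) => [K cK|G oG].
  rewrite missesE -(preimage_setC (crop u d s)) preimage_crop_hits -missesE.
  by apply: misses_measurable; exact: compact_tshift (compact_closedI cK (closed_strip d)).
rewrite preimage_crop_hits image_tshift preimage_setI.
apply: (hits_measurable hb).
  exact: (continuousP _).1 (tshift_continuous _) _ oG.
exact: (continuous_closedP _).1 (tshift_continuous _) _ (closed_strip d).
Qed.

Lemma measurable_oplus a e : 0 <= a -> 0 <= e ->
  measurable_fun setT (oplus a e : Ct a * Ct e -> Ct (a + e)).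
Proof.
move=> a0 e0; apply: (measurable_fun_Ct hb) => [K cK|G oG].
  rewrite preimage_oplus_misses //.
  by apply: measurableX; apply: misses_measurable => //; exact: compact_tshift.
rewrite preimage_oplus_hits //.
apply: measurableU; apply: measurableX => //; apply: hits_open_measurable => //.
exact: open_tshift.
Qed.

Lemma measurable_hits_slice t r : measurable (@hits_slice R L t r).
Proof.
have -> : hits_slice t r = hits t (setT `&` ([set r] `*` [set: L])).
  apply/seteqP; split => Z; first by move=> [l Zl]; exists (r, l).
  by move=> [[x l] [Zxl [_ [/= xr _]]]]; exists l; rewrite -xr.
apply: (hits_measurable hb); first exact: openT.
exact/closed_setXT/accessible_closed_set1/hausdorff_accessible/Rhausdorff.
Qed.

End MeasurableMaps.

Section NullSets.
Local Open Scope ereal_scope.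
Context {R : realType}.

Lemma measure_eq_off_null {d} {T : measurableType d} (m : {measure set T -> \bar R})
    (E F N : set T) :
  measurable E -> measurable F -> measurable N -> m N = 0 ->
  E `\` N = F `\` N -> m E = m F.
Proof.
move=> mE mF mN N0 EF; have /(null_setU m mN) mU := (measure0_null_setP m mN).2 N0.
by rewrite -mU // -[E `|` N]setD0 -(setDv N) -setUDl EF setUDl setDv setD0 mU.
Qed.

Context {d1 d2 : measure_display} {X : measurableType d1} {Y : measurableType d2}.
Context (P1 : probability X R) (P2 : probability Y R).

Lemma product_probability_null_fst (E : set (X * Y)) (H : set X) (B : set Y) :
  measurable E -> measurable H -> measurable B -> P1 H = 0 ->
  (forall x y, ~ H x -> E (x, y) <-> B y) -> (P1 \x P2) E = P2 B.
Proof.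
move=> mE mH mB H0 EB.
rewrite (measure_eq_off_null _ E (setT `*` B) (H `*` setT)) //.
- have := product_measure1E P1 P2 measurableT mB; rewrite /= => ->.
  by rewrite probability_setT mul1e.
- exact: measurableX.
- exact: measurableX.
- by have := product_measure1E P1 P2 mH measurableT; rewrite /= => ->; rewrite H0 mul0e.
apply/seteqP; split => -[x y] [Exy nHxy]; split => //.
  by split => //; apply/(EB x y) => // Hx; apply: nHxy.
by case: Exy => _ By; apply/(EB x y) => // Hx; apply: nHxy.
Qed.

Lemma product_probability_null_snd (E : set (X * Y)) (H : set Y) (A : set X) :
  measurable E -> measurable H -> measurable A -> P2 H = 0 ->
  (forall x y, ~ H y -> E (x, y) <-> A x) -> (P1 \x P2) E = P1 A.
Proof.
move=> mE mH mA H0 EA.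
rewrite (measure_eq_off_null _ E (A `*` setT) (setT `*` H)) //.
- have := product_measure1E P1 P2 mA measurableT; rewrite /= => ->.
  by rewrite probability_setT mule1.
- exact: measurableX.
- exact: measurableX.
- by have := product_measure1E P1 P2 measurableT mH; rewrite /= => ->; rewrite H0 mule0.
apply/seteqP; split => -[x y] [Exy nHxy]; split => //.
  by split => //; apply/(EA x y) => // Hy; apply: nHxy.
by case: Exy => Ax _; apply/(EA x y) => // Hy; apply: nHxy.
Qed.

End NullSets.

Section AbsoluteContinuity.
Local Open Scope ereal_scope.
Context {R : realType} {d1 d2 : measure_display}.
Context {T1 : measurableType d1} {T2 : measurableType d2}.

Lemma preimage_measurable {f : T1 -> T2} {A : set T2} :
  measurable_fun setT f -> measurable A -> measurable (f @^-1` A).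
Proof. by move=> mf mA; rewrite -[f @^-1` A]setTI; exact: mf. Qed.

Lemma null_set_pushforward (m : {measure set T1 -> \bar R}) (f : T1 -> T2) (A : set T2) :
  measurable_fun setT f -> measurable A ->
  (pushforward m f).-null_set A <-> m (f @^-1` A) = 0.
Proof.
move=> mf mA; split => [|fA0 B mB BA]; first exact.
rewrite /pushforward; apply/eqP; rewrite eq_le measure_ge0 andbT -fA0.
by apply: le_measure; rewrite ?in_setE; [exact: preimage_measurable mf mB |
  exact: preimage_measurable mf mA | exact: preimage_subset].
Qed.

Lemma null_iff_mutually_ac (m1 m2 : set T2 -> \bar R) :
  (forall A, measurable A -> m1 A = 0 <-> m2 A = 0) -> mutually_ac m1 m2.
Proof. by move=> m12; split => N mN A mA AN; apply/m12 => //; exact: mN. Qed.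

End AbsoluteContinuity.

Section FactorizingFamily.
Context {R : realType} {L : topologicalType} {b : nat -> set L}.
Hypothesis hb : compact_closure_base b.
Context {mu : forall t : R, probability (@Ct R L t) R}.
Hypothesis mu_fact : factorizing mu.

Lemma factorizing_null a e X : 0 < a -> 0 < e -> measurable X ->
  mu (a + e) X = 0%E <-> (mu a \x mu e)%E (oplus a e @^-1` X) = 0%E.
Proof.
move=> a0 e0 mX; have [push_mu mu_push] := mu_fact.1 a e a0 e0.
rewrite -(measure0_null_setP _ mX) -null_set_pushforward //; last first.
  exact: (measurable_oplus hb) (ltW a0) (ltW e0).
by split; [exact: mu_push | exact: push_mu].
Qed.

Lemma null_crop_oplusr a e c d A : 0 <= a -> 0 < e -> a + e = c -> measurable A ->
  mu c (crop c d a @^-1` A) = 0%E <-> mu e (crop e d 0 @^-1` A) = 0%E.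
Proof.
move=> + e0 <- mA; rewrite le_eqVlt => /predU1P [<-|a0]; first by rewrite add0r.
have mcrop u s : measurable (crop u d s @^-1` A).
  exact: preimage_measurable (measurable_crop hb u d s) mA.
rewrite factorizing_null //.
rewrite (product_probability_null_fst _ _ _ (hits_slice a a) (crop e d 0 @^-1` A)) //.
- exact: preimage_measurable (measurable_oplus hb _ _ (ltW a0) (ltW e0)) (mcrop _ _).
- exact: (measurable_hits_slice hb).
- by apply: mu_fact.2 => //; rewrite lexx ltW.
by move=> Z1 Z2 Z1a; rewrite /= crop_oplusr // ltW.
Qed.

Lemma null_crop_oplusl d e c A : 0 < d -> 0 <= e -> d + e = c -> measurable A ->
  mu c (crop c d 0 @^-1` A) = 0%E <-> mu d A = 0%E.
Proof.
move=> d0 + <- mA; rewrite le_eqVlt => /predU1P [<-|e0].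
  by rewrite addr0 (_ : crop d d 0 @^-1` A = A) //; apply/seteqP; split => Z; rewrite /= crop_id.
rewrite factorizing_null //; last exact: preimage_measurable (measurable_crop hb _ _ _) mA.
rewrite (product_probability_null_snd _ _ _ (hits_slice e 0) A) //.
- exact: preimage_measurable (measurable_oplus hb _ _ (ltW d0) (ltW e0))
    (preimage_measurable (measurable_crop hb _ _ _) mA).
- exact: (measurable_hits_slice hb).
- by apply: mu_fact.2 => //; rewrite lexx ltW.
by move=> Z1 Z2 Z20; rewrite /= crop_oplusl // ltW.
Qed.

Lemma null_crop s t A : 0 <= s -> s < t -> t <= 1 -> measurable A ->
  mu 1 (crop 1 (t - s) s @^-1` A) = 0%E <-> mu (t - s) A = 0%E.
Proof.
move=> s0 st t1 mA.
rewrite (null_crop_oplusr s (1 - s) 1 (t - s) A) //; [|lra|lra].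
by rewrite (null_crop_oplusl (t - s) (1 - t) (1 - s) A) //; lra.
Qed.

End FactorizingFamily.

Theorem lemma2p6 (R : realType) (L : topologicalType)
  (L_lc : locally_compact [set: L]) (L_sc : @second_countable L)
  (L_T2 : hausdorff_space L)
  (mu : forall t : R, probability (@Ct R L t) R)
  (mu_fact : factorizing mu) :
  forall s t : R, 0 <= s -> s < t -> t <= 1 ->
    mutually_ac (pushforward (mu 1) (@restr R L s t)) (mu (t - s)).
Proof.
move=> s t s0 st t1; have [b hb] := compact_closure_base_exists L_lc L_sc L_T2.
rewrite restr_crop; apply: null_iff_mutually_ac => A mA.
exact: (null_crop hb mu_fact s t A s0 st t1 mA).
Qed.
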